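(* Let $n\ge2$ and let $G$ be a finite simple graph with $n$ vertices. Then $s(\{\rho(B)\}*\{I(G)\})\subseteq 2\mathbb{Z}$ for every connected bipartite graph $B$ with $n$ vertices if and only if every vertex of $G$ has even degree (i.e. every connected component of $G$ is Eulerian). In the notation of orthogonality classes: $I^{-1}\big(\rho(\{\text{connected bipartite graphs on } n \text{ vertices}\})^{\perp_{\mathscr P(2\mathbb Z)}}\big)$ is exactly the set of graphs on $n$ vertices all of whose components are Eulerian.
   Context: Take $R=\mathbb{Z}$. An $R$-weighted complete graph $K$ is a finite vertex set with a weight $v_K(e)\in R$ on every 2-subset $e$. For $H,G'$ with equal vertex counts and a bijection $f:V(H)\to V(G')$, $H*_fG'$ has vertex set $V(H)$ and weights $v_H(\{x,y\})v_{G'}(\{f(x),f(y)\})$; $H*G'=\{H*_fG': f \text{ bijection}\}$. $s(K)=\sum_e v_K(e)$, $s(\mathscr K)=\{s(K):K\in\mathscr K\}$. For a simple graph $G$, $I(G)$ has weight $1$ on edges and $0$ on non-edges; for connected $B$, $\rho(B)$ has weight $\rho_B(x,y)$ (graph distance). For a set $\mathscr H$ of weighted complete graphs on $n$ vertices and a family $\mathscr A$ of subsets of $\mathbb Z$, $\mathscr H^{\perp_{\mathscr A}}$ is the class of weighted complete graphs $X$ on $n$ vertices with $s(H*X)\in\mathscr A$ for all $H\in\mathscr H$; $\mathscr P(2\mathbb Z)$ is the family of all subsets of the even integers; $I^{-1}$ of a class means the simple graphs $G$ with $I(G)$ in that class. *)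

From mathcomp Require Import all_boot all_order.
From mathcomp Require Import fingroup perm.
Set Implicit Arguments. Unset Strict Implicit. Unset Printing Implicit Defensive.

Definition simple_graph (T : finType) (e : rel T) : Prop :=
  symmetric e /\ irreflexive e.

Definition graph_connected (T : finType) (e : rel T) : Prop :=
  forall x y : T, connect e x y.

Definition bipartite (T : finType) (e : rel T) : Prop :=
  exists c : T -> bool, forall x y, e x y -> c x != c y.

Fixpoint walk (T : finType) (e : rel T) (k : nat) (x y : T) : bool :=
  if k is k'.+1 then [exists z, e x z && walk e k' z y] else x == y.

(* Graph distance: the least k with a walk of length k from x to y
   (searching k = 0 .. #|T|-1; for connected graphs this is the exact
   distance, since any distance is < #|T|). *)
Definition gdist (T : finType) (e : rel T) (x y : T) : nat :=
  find (fun k => walk e k x y) (iota 0 #|T|).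

Definition degree (T : finType) (e : rel T) (x : T) : nat :=
  #|[set y | e x y]|.

(* s(rho(B) *_f I(G)) : sum over 2-subsets {i,j} (i<j) of
   rho_B(i,j) * v_{I(G)}({f i, f j}). *)
Definition s_rho_I (n : nat) (B G : rel 'I_n) (f : {perm 'I_n}) : nat :=
  \sum_(i < n) \sum_(j < n | i < j) gdist B i j * (G (f i) (f j) : nat).

From mathcomp Require Import all_boot all_order.
From mathcomp Require Import fingroup perm.

Set Implicit Arguments.
Unset Strict Implicit.
Unset Printing Implicit Defensive.

(* If B is connected with bipartition c, then rho_B(i,j) is odd exactly when
   c i != c j.  Since (c i != c j) = c i + c j mod 2, the sum over pairs
   i < j of rho_B(i,j) G(f i, f j) is congruent to the sum over ordered
   pairs of c i G(f i, f j), i.e. to the sum of the degrees of the f i with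
   c i set.  This is even whenever all degrees are; conversely, a star
   centred at x makes the sum equal to deg x. *)

Lemma eq_odd_sum (I : Type) (r : seq I) (P : pred I) (F F' : I -> nat) :
  (forall i, P i -> odd (F i) = odd (F' i)) ->
  odd (\sum_(i <- r | P i) F i) = odd (\sum_(i <- r | P i) F' i).
Proof.
move=> oddFF'; apply: (big_ind2 (fun a b => odd a = odd b)) => //.
by move=> a b a' b' ha hb; rewrite !oddD ha hb.
Qed.

Lemma even_sum (I : Type) (r : seq I) (P : pred I) (F : I -> nat) :
  (forall i, P i -> ~~ odd (F i)) -> ~~ odd (\sum_(i <- r | P i) F i).
Proof.
move=> evenF; rewrite (@eq_odd_sum _ _ _ _ (fun=> 0)) ?big1 // => i Pi.
by rewrite (negbTE (evenF i Pi)).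
Qed.

Lemma sum_ord_pairs n (K : 'I_n -> 'I_n -> nat) :
  \sum_(i < n) \sum_(j < n) K i j =
  \sum_(i < n) \sum_(j < n | i < j) (K i j + K j i) + \sum_(i < n) K i i.
Proof.
have split_row i : \sum_(j < n) K i j =
    \sum_(j < n | i < j) K i j + \sum_(j < n | j < i) K i j + K i i.
  rewrite (bigID (fun j : 'I_n => i < j)) /= -addnA; congr (_ + _).
  rewrite (bigID (fun j : 'I_n => j < i)) /=; congr (_ + _).
    by apply: eq_bigl => j; case: ltngtP.
  by apply: big_pred1 => j /=; rewrite -(inj_eq val_inj) /=; case: ltngtP.
have lower_to_upper :
    \sum_(i < n) \sum_(j < n | j < i) K i j = \sum_(i < n) \sum_(j < n | i < j) K j i.
  rewrite (eq_bigr (fun i : 'I_n => \sum_(j < n) (if j < i then K i j else 0)));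
    last by move=> i _; rewrite big_mkcond.
  rewrite exchange_big; apply: eq_bigr => i _.
  by rewrite [RHS]big_mkcond; apply: eq_bigr.
rewrite (eq_bigr _ (fun i _ => split_row i)) !big_split /= lower_to_upper.
by rewrite -big_split; congr (_ + _); apply: eq_bigr => i _; rewrite big_split.
Qed.

Lemma degree_sum (T : finType) (e : rel T) (x : T) :
  degree e x = \sum_(y : T) (e x y : nat).
Proof.
rewrite /degree -sum1_card big_mkcond /=.
by apply: eq_bigr => y _; rewrite inE; case: (e x y).
Qed.

Lemma odd_walk (T : finType) (e : rel T) (c : T -> bool) k x y :
  (forall x y, e x y -> c x != c y) -> walk e k x y -> odd k = (c x != c y).
Proof.
move=> e_bip.
elim: k x => [|k IHk] x /=; first by move/eqP->; rewrite eqxx.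
case/existsP=> z /andP[exz wzy]; rewrite (IHk z wzy).
by move: (e_bip _ _ exz); case: (c x); case: (c y); case: (c z).
Qed.

Lemma path_walk (T : finType) (e : rel T) (x : T) (p : seq T) :
  path e x p -> walk e (size p) x (last x p).
Proof.
elim: p x => [|z p IHp] x /=; first by rewrite eqxx.
by case/andP=> exz pz; apply/existsP; exists z; rewrite exz IHp.
Qed.

Lemma gdist_walk (T : finType) (e : rel T) (x y : T) :
  connect e x y -> walk e (gdist e x y) x y.
Proof.
case/connectP=> p ep ->; have [q eq_q uq _] := shortenP ep.
have q_small : size q < #|T| by move/card_uniqP: uq => /= <-; apply: max_card.
have has_walk : has (fun k => walk e k x (last x q)) (iota 0 #|T|).
  by apply/hasP; exists (size q); rewrite ?mem_iota ?path_walk.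
have := nth_find 0 has_walk; rewrite nth_iota // -{2}(size_iota 0 #|T|).
by rewrite -has_find.
Qed.

Lemma odd_gdist (T : finType) (e : rel T) (c : T -> bool) :
  (forall x y, e x y -> c x != c y) -> graph_connected e ->
  forall x y, odd (gdist e x y) = (c x != c y).
Proof. by move=> e_bip e_conn x y; apply/(odd_walk e_bip)/gdist_walk. Qed.

Lemma odd_s_rho_I n (B G : rel 'I_n) (c : 'I_n -> bool) (f : {perm 'I_n}) :
  simple_graph G -> (forall i j, odd (gdist B i j) = (c i != c j)) ->
  odd (s_rho_I B G f) = odd (\sum_(i < n) c i * degree G (f i)).
Proof.
move=> [G_sym G_irr] odd_gdistB.
pose K i j := c i * G (f i) (f j).
have pairs_mod2 : odd (s_rho_I B G f) =
    odd (\sum_(i < n) \sum_(j < n | i < j) (K i j + K j i)).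
  apply: eq_odd_sum => i _; apply: eq_odd_sum => j _.
  rewrite oddM odd_gdistB oddD !oddM /K (G_sym (f j)).
  by case: (c i); case: (c j); case: (G (f i) (f j)).
rewrite pairs_mod2; congr (odd _).
have := @sum_ord_pairs n K; rewrite (big1 _ _ (fun i => K i i)) => [|i _]; last first.
  by rewrite /K G_irr muln0.
rewrite addn0 => <-; apply: eq_bigr => i _.
by rewrite degree_sum big_distrr [RHS](reindex_inj (@perm_inj _ f)).
Qed.

Section Star.

Variables (T : finType) (x : T).

Definition star : rel T := fun i j => (i == x) != (j == x).

Lemma star_simple : simple_graph star.
Proof.
by split=> [i j|i]; rewrite /star; [case: (i == x); case: (j == x) | case: (i == x)].
Qed.

Lemma star_colouring i j : star i j -> (i == x) != (j == x).
Proof. by []. Qed.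

Lemma star_bipartite : bipartite star.
Proof. by exists (fun i => i == x); apply: star_colouring. Qed.

Lemma star_connected : graph_connected star.
Proof.
have to_centre y : connect star y x.
  by have [->|ne] := eqVneq y x; rewrite ?connect0 // connect1 // /star eqxx (negbTE ne).
move=> y z; apply: connect_trans (to_centre y) _.
by rewrite (sym_connect_sym star_simple.1) to_centre.
Qed.

End Star.

Theorem mainTheorem20 (n : nat) (G : rel 'I_n) :
  2 <= n -> simple_graph G ->
  ((forall B : rel 'I_n, simple_graph B -> graph_connected B -> bipartite B ->
      forall f : {perm 'I_n}, ~~ odd (s_rho_I B G f))
   <-> (forall x : 'I_n, ~~ odd (degree G x))).
Proof.
move=> _ G_simple; split=> [even_s x | even_deg B B_simple B_conn [c B_bip] f].
  have := even_s _ (star_simple x) (star_connected x) (star_bipartite x) 1%g.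
  rewrite (odd_s_rho_I _ G_simple (odd_gdist (@star_colouring _ x) (star_connected x))).
  by rewrite (bigD1 x) //= big1 => [|i /negbTE ->]; rewrite ?eqxx ?perm1 ?mul1n ?addn0.
rewrite (odd_s_rho_I _ G_simple (odd_gdist B_bip B_conn)).
by apply: even_sum => i _; rewrite oddM (negbTE (even_deg (f i))) andbF.
Qed.
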